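(* For any $K\ge0$, any distribution generating $(x_t,\mathscr C_t)_{t=1}^V$, and any class $L\subseteq[\kappa]^{\mathcal X}$ of benchmark predictors, there exists a strategy for choosing the labels $y_1,\dots,y_V$ such that every prediction algorithm satisfies $$\mathbb E[\mathbf{Reg}]\ge\frac1\kappa\,\mathbb E_{(\mathscr C,x)_{1:V}}\mathrm{Rad}_V(L_K(\mathcal I_{1:V})).$$
   Context: Notation: $[n]=\{1,\dots,n\}$. Setting: $V\ge1$, $\kappa\ge2$, a set $\mathcal X$, a class $L$ of functions $\mathcal X\to[\kappa]$. A constraint $c=(S_c,R_c)$, $S_c\subseteq[V]$, $R_c:[\kappa]^{S_c}\to\mathbb R_{\ge0}$; $c(g)=R_c(g|_{S_c})$ for $g\in[\kappa]^V$. On rounds $t=1,\dots,V$ the forecaster observes $x_t\in\mathcal X$ and a finite constraint set $\mathscr C_t$ ($\mathcal I_t=(\mathscr C_t,x_t)$, drawn from a known distribution), predicts $\widehat y_t\in[\kappa]$ (possibly randomized), then observes $y_t\in[\kappa]$. $L_K(\mathcal I_{1:V})=\{f\in L:\sum_{c\in\cup_t\mathscr C_t}c((f(x_1),\dots,f(x_V)))\le K\}$; $\mathbf{Reg}=\sum_t\mathbf 1\{\widehat y_t\ne y_t\}-\inf_{f\in L_K(\mathcal I_{1:V})}\sum_t\mathbf 1\{f(x_t)\ne y_t\}$, expectation over all randomness. $\mathrm{Rad}_V(L_K(\mathcal I_{1:V}))=\mathbb E_{\boldsymbol\epsilon}\sup_{f\in L_K(\mathcal I_{1:V})}\sum_{j=1}^V\sum_{k=1}^\kappa\boldsymbol\epsilon_{j,k}\mathbf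 1\{f(x_j)=k\}$ with $\boldsymbol\epsilon_{j,k}$ i.i.d. uniform on $\{-1,1\}$. *)

From HB Require Import structures.
From mathcomp Require Import all_boot all_order all_algebra.
From mathcomp Require Import all_classical all_reals all_analysis.
Set Implicit Arguments. Unset Strict Implicit. Unset Printing Implicit Defensive.
Import Order.TTheory GRing.Theory Num.Theory.
Local Open Scope classical_set_scope.
Local Open Scope ring_scope.

(* Labels [kappa] = {1,..,kappa} are represented by 'I_kappa = {0,..,kappa-1};
   rounds [V] by 'I_V. *)

Section Setting.
Variables (R : realType) (V kappa : nat).

Record constraint := Constraint {
  cS : {set 'I_V};
  cR : {ffun {i : 'I_V | i \in cS} -> 'I_kappa} -> R;
  cR_ge0 : forall h, 0 <= cR h }.

HB.instance Definition _ := gen_eqMixin constraint.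
HB.instance Definition _ := gen_choiceMixin constraint.

Definition ceval (c : constraint) (g : 'I_V -> 'I_kappa) : R :=
  @cR c [ffun i => g (val i)].

Variable X : Type.

(* One round's side information I_t = (C_t, x_t); C_t a finite set of
   constraints (given as a finite list). *)
Definition instance := (seq constraint * X)%type.

Definition all_constraints (I : 'I_V -> instance) : set constraint :=
  [set c | exists t : 'I_V, c \in (I t).1].

Definition LK (L : set (X -> 'I_kappa)) (K : R) (I : 'I_V -> instance)
  : set (X -> 'I_kappa) :=
  [set f | L f /\
     (\sum_(c \in all_constraints I) ceval c (fun t => f (I t).2) <= K)%R].

(* A (behavioural) randomized strategy: given the history
   (I_1..I_t, yhat_1..yhat_{t-1}, y_1..y_{t-1}) it returns a probability
   mass function on [kappa]. *)
Definition strategy := seq instance -> seq 'I_kappa -> seq 'I_kappa -> 'I_kappa -> R.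

Definition valid_strategy (s : strategy) :=
  forall hI hp hy, (forall k, 0 <= s hI hp hy k) /\ \sum_k s hI hp hy k = 1.

Definition seq_of (T : Type) (u : 'I_V -> T) : seq T := [seq u i | i <- enum 'I_V].

(* probability that forecaster F and adversary A produce predictions yh and
   labels y on the instance sequence I; at round t both see I_{1:t},
   yh_{1:t-1}, y_{1:t-1} and randomize independently. *)
Definition play_prob (F A : strategy) (I : 'I_V -> instance)
  (yh y : {ffun 'I_V -> 'I_kappa}) : R :=
  \prod_(t < V)
    (F (take t.+1 (seq_of I)) (take t (seq_of yh)) (take t (seq_of y)) (yh t) *
     A (take t.+1 (seq_of I)) (take t (seq_of yh)) (take t (seq_of y)) (y t)).

Definition nmistakes (p y : 'I_V -> 'I_kappa) : R :=
  \sum_(t < V) (p t != y t)%:R.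

(* Reg for a realized play (inf over the empty set is +oo). *)
Definition regret (L : set (X -> 'I_kappa)) (K : R) (I : 'I_V -> instance)
  (yh y : {ffun 'I_V -> 'I_kappa}) : \bar R :=
  ((nmistakes yh y)%:E -
   ereal_inf [set (nmistakes (fun t => f (I t).2) y)%:E | f in LK L K I])%E.

Definition exp_regret (L : set (X -> 'I_kappa)) (K : R) (F A : strategy)
  (I : 'I_V -> instance) : \bar R :=
  (\sum_(yh : {ffun 'I_V -> 'I_kappa}) \sum_(y : {ffun 'I_V -> 'I_kappa})
     (play_prob F A I yh y)%:E * regret L K I yh y)%E.

Definition sgnb (b : bool) : R := if b then 1 else -1.

(* Rad_V(L_K(I_{1:V})), eps uniform on {-1,1}^{V x kappa} (sup over the
   empty set is -oo). *)
Definition Rad (L : set (X -> 'I_kappa)) (K : R) (I : 'I_V -> instance) : \bar R :=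
  (\sum_(e : {ffun 'I_V * 'I_kappa -> bool})
     ((2 ^+ (V * kappa))^-1)%:E *
     ereal_sup [set (\sum_(j < V) \sum_(k < kappa)
                       sgnb (e (j, k)) * ((f (I j).2 == k)%:R))%:E
               | f in LK L K I])%E.

End Setting.

From HB Require Import structures.
From mathcomp Require Import all_boot all_order all_algebra.
From mathcomp Require Import all_classical all_reals all_analysis.
From mathcomp Require Import ring lra.
Import Order.TTheory GRing.Theory Num.Theory.
Local Open Scope classical_set_scope.
Local Open Scope ring_scope.
Set Implicit Arguments. Unset Strict Implicit. Unset Printing Implicit Defensive.

(* The adversary draws every label uniformly and independently.  Whatever the
   forecaster does, it then errs with probability [1 - 1/k] at each round,
   while the best predictor of [L_K] makes on average [V - (V + m)/k] mistakes,
   where [m] is the expected maximal score [\sum_t (k 1{f x_t = y_t} - 1)]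
   over [L_K].  The rows [k 1{i = y_t} - 1] have mean zero like Rademacher
   rows, and replacing the Rademacher rows by them one at a time can only
   increase the expected maximum; hence [Rad <= m] and the expected regret is
   at least [m/k >= Rad/k] for every instance sequence.  Integrating this
   pointwise bound needs no measurability. *)

Lemma sum_update (A B : finType) (R : nmodType) (upd : A -> B -> A)
    (proj : A -> B) (F : A -> R) :
  involutive (fun p : A * B => (upd p.1 p.2, proj p.1)) ->
  \sum_a \sum_b F (upd a b) = (\sum_a F a) *+ #|B|.
Proof.
set tau := fun p : A * B => _ => inv.
transitivity (\sum_(p : A * B) F (tau p).1); first by rewrite pair_big.
rewrite (reindex_inj (can_inj inv)).
under eq_bigr => p _ do rewrite inv.
rewrite -(pair_big predT predT (fun a _ => F a)) /= -sumrMnl.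
by apply: eq_bigr => a _; rewrite sumr_const.
Qed.

Definition fupd (I : finType) (T : Type) (f : {ffun I -> T}) (i : I) (x : T) :=
  [ffun j => if j == i then x else f j].

Lemma fupd_involutive (I : finType) (T : Type) (i : I) :
  involutive (fun p : {ffun I -> T} * T => (fupd p.1 i p.2, p.1 i)).
Proof.
move=> [f x] /=; rewrite /fupd ffunE eqxx; congr pair.
by apply/ffunP => j; rewrite !ffunE; case: eqP => [->|].
Qed.

Lemma sum_ffun_coord (R : pzSemiRingType) (I : finType) (i : I) :
  (\sum_(r : {ffun I -> bool}) ((r i)%:R : R)) *+ 2 = 2 ^+ #|I|.
Proof.
rewrite -card_bool.
have /= <- := sum_update (upd := fun f b => fupd f i b) (proj := fun r => r i)
  (fun r : {ffun I -> bool} => ((r i)%:R : R)) (fupd_involutive i).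
under eq_bigr => r _ do rewrite big_bool /= /fupd !ffunE eqxx.
by rewrite sumr_const card_ffun card_bool /= addr0 natrX.
Qed.

Section MaxScore.
Variables (R : realType) (V k : nat).
Variables (S : pred {ffun 'I_V -> 'I_k}) (g0 : {ffun 'I_V -> 'I_k}).
Hypothesis Sg0 : S g0.

Definition score (M : 'I_V -> 'I_k -> R) (g : {ffun 'I_V -> 'I_k}) : R :=
  \sum_t M t (g t).

Definition maxscore (M : 'I_V -> 'I_k -> R) : R :=
  \big[Order.max/score M g0]_(g | S g) score M g.

Lemma maxscore_ge M g : S g -> score M g <= maxscore M.
Proof. exact: le_bigmax_cond. Qed.

Lemma maxscore_le M b : (forall g, S g -> score M g <= b) -> maxscore M <= b.
Proof. by move=> Mb; apply: bigmax_le => //; exact: Mb. Qed.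

Lemma maxscore_attained M : exists g, S g /\ maxscore M = score M g.
Proof.
case: (@arg_maxP _ _ _ g0 S (score M) Sg0) => g Sg gmax.
exists g; split => //; apply/eqP; rewrite eq_le maxscore_ge // andbT.
exact: maxscore_le.
Qed.

Definition set_row (M : 'I_V -> 'I_k -> R) (j : 'I_V) (x : 'I_k -> R) :=
  fun t => if t == j then x else M t.

(* The score of the rows [label_row (y t)] at [g] is [k] times the number of
   agreements of [g] with [y], minus [V]. *)
Definition label_row (a : 'I_k) : 'I_k -> R := fun i => k%:R * (i == a)%:R - 1.

Section OneRow.
Variables (M : 'I_V -> 'I_k -> R) (j : 'I_V).
Hypothesis hk : (2 <= k)%N.

Let rest g := \sum_(t | t != j) M t (g t).
Let top := \big[Order.max/rest g0]_(g | S g) rest g.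
Let slack (c : R) (i : 'I_k) :=
  \big[Order.max/0]_(g | S g && (g j == i)) (c + rest g - top).

Let kgt0 : (0 : R) < k%:R.
Proof. by rewrite ltr0n; apply: leq_trans hk. Qed.

Let score_set_row x g : score (set_row M j x) g = x (g j) + rest g.
Proof.
rewrite /score (bigD1 j) //= /set_row eqxx; congr (_ + _).
by apply: eq_bigr => t /negbTE ->.
Qed.

Let rest_le_top g : S g -> rest g <= top.
Proof. exact: le_bigmax_cond. Qed.

Let slack_ge0 c i : 0 <= slack c i.
Proof. exact: bigmax_ge_id. Qed.

(* [2 + x <= (2 / k) (k + x)] for [x <= 0] and [k >= 2]. *)
Let slack_two_le i : slack 2 i <= 2 / k%:R * slack k%:R i.
Proof.
apply: bigmax_le => [|g /andP[Sg /eqP gj]].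
  by rewrite mulr_ge0 ?slack_ge0 // divr_ge0 // ltW.
have kslack : k%:R + rest g - top <= slack k%:R i.
  by apply: le_bigmax_cond; rewrite Sg gj eqxx.
apply: le_trans (_ : _ <= 2 / k%:R * (k%:R + rest g - top)) _; last first.
  by rewrite ler_pM2l // divr_gt0.
have -> : 2 / k%:R * (k%:R + rest g - top) = 2 + 2 / k%:R * (rest g - top).
  by field; rewrite gt_eqF.
have two_k : 2 / k%:R <= 1 :> R by rewrite ler_pdivrMr // mul1r ler_nat.
have := rest_le_top Sg; nra.
Qed.

Let maxscore_sign_row_le (r : {ffun 'I_k -> bool}) :
  maxscore (set_row M j (fun i => sgnb R (r i)))
    <= top - 1 + \sum_i (r i)%:R * slack 2 i.
Proof.
apply: maxscore_le => g Sg; rewrite score_set_row /sgnb.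
have := rest_le_top Sg.
have sum_ge0 P : 0 <= \sum_(i | P i) ((r i)%:R : R) * slack 2 i.
  by apply: sumr_ge0 => i _; rewrite mulr_ge0.
case rg: (r (g j)); last by have := sum_ge0 predT; lra.
rewrite (bigD1 (g j)) //= rg mul1r.
have : 2 + rest g - top <= slack 2 (g j) by apply: le_bigmax_cond; rewrite Sg eqxx.
by have := sum_ge0 (predC1 (g j)); lra.
Qed.

Let maxscore_label_row_ge a :
  top - 1 + slack k%:R a <= maxscore (set_row M j (label_row a)).
Proof.
set m := maxscore _.
have rest_le g : S g -> rest g <= m + 1.
  move=> Sg; have := maxscore_ge (set_row M j (label_row a)) Sg.
  rewrite score_set_row /label_row -/m.
  by have := kgt0; case: (g j == a); rewrite /= ?mulr1 ?mulr0; lra.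
have top_le : top <= m + 1 by apply: bigmax_le => //; exact: rest_le.
suff : slack k%:R a <= m + 1 - top by lra.
apply: bigmax_le => [|g /andP[Sg /eqP gj]]; first by lra.
have := maxscore_ge (set_row M j (label_row a)) Sg.
by rewrite score_set_row /label_row gj eqxx mulr1 -/m; lra.
Qed.

(* A random sign row gains on average half of the slacks [slack 2 i], a
   random label row a [1/k] share of the larger slacks [slack k i]. *)
Lemma mean_sign_row_le_mean_label_row :
  (2 ^+ k)^-1 * \sum_(r : {ffun 'I_k -> bool})
                  maxscore (set_row M j (fun i => sgnb R (r i)))
    <= k%:R^-1 * \sum_a maxscore (set_row M j (label_row a)).
Proof.
have coord i : \sum_(r : {ffun 'I_k -> bool}) ((r i)%:R : R) = 2 ^+ k / 2.
  by have := sum_ffun_coord R i; rewrite card_ord -mulr_natr => <-; field.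
have mean_sign : (2 ^+ k)^-1 *
    \sum_(r : {ffun 'I_k -> bool}) (top - 1 + \sum_i (r i)%:R * slack 2 i)
    = top - 1 + 2^-1 * \sum_i slack 2 i.
  rewrite big_split /= sumr_const card_ffun card_bool card_ord exchange_big /=.
  under eq_bigr do rewrite -mulr_suml coord.
  rewrite -mulr_sumr -[(top - 1) *+ _]mulr_natr natrX; field.
  by rewrite expf_neq0.
have mean_label : k%:R^-1 * \sum_(a : 'I_k) (top - 1 + slack k%:R a)
    = top - 1 + k%:R^-1 * \sum_a slack k%:R a.
  rewrite big_split /= sumr_const card_ord -[(top - 1) *+ _]mulr_natr.
  by field; rewrite gt_eqF.
apply: le_trans (_ : _ <= top - 1 + 2^-1 * \sum_i slack 2 i) _.
  rewrite -mean_sign ler_pM2l ?invr_gt0 ?exprn_gt0 //.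
  by apply: ler_sum => r _; exact: maxscore_sign_row_le.
apply: le_trans (_ : _ <= top - 1 + k%:R^-1 * \sum_a slack k%:R a) _.
  rewrite lerD2l !mulr_sumr; apply: ler_sum => i _.
  apply: le_trans (_ : _ <= 2^-1 * (2 / k%:R * slack k%:R i)) _.
    by rewrite ler_pM2l ?invr_gt0.
  by rewrite !mulrA mulVf ?mul1r ?pnatr_eq0.
rewrite -mean_label ler_pM2l ?invr_gt0 //.
by apply: ler_sum => a _; exact: maxscore_label_row_ge.
Qed.

End OneRow.
End MaxScore.

Definition set_sign_row (I J : finType) (e : {ffun I * J -> bool}) (j : I)
    (r : {ffun J -> bool}) : {ffun I * J -> bool} :=
  [ffun p => if p.1 == j then r p.2 else e p].

Definition sign_row (I J : finType) (e : {ffun I * J -> bool}) (j : I) :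
  {ffun J -> bool} := [ffun i => e (j, i)].

Lemma set_sign_row_involutive (I J : finType) (j : I) :
  involutive (fun p : {ffun I * J -> bool} * {ffun J -> bool} =>
                (set_sign_row p.1 j p.2, sign_row p.1 j)).
Proof.
move=> [e r] /=; congr pair; apply/ffunP.
  by move=> [t i]; rewrite !ffunE /=; case: eqP => [->|]; rewrite ?ffunE /= ?eqxx.
by move=> i; rewrite !ffunE /= eqxx.
Qed.

Section Hybrid.
Variables (R : realType) (V k : nat).
Hypothesis hk : (2 <= k)%N.
Variables (S : pred {ffun 'I_V -> 'I_k}) (g0 : {ffun 'I_V -> 'I_k}).
Hypothesis Sg0 : S g0.

Local Notation maxscore := (maxscore S g0).

Let kgt0 : (0 : R) < k%:R.
Proof. by rewrite ltr0n; apply: leq_trans hk. Qed.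

Definition hybrid n (y : {ffun 'I_V -> 'I_k}) (e : {ffun 'I_V * 'I_k -> bool}) :
    'I_V -> 'I_k -> R :=
  fun t => if (t < n)%N then label_row R (y t) else fun i => sgnb R (e (t, i)).

Definition hybrid_sum n : R := \sum_e \sum_y maxscore (hybrid n y e).

Lemma hybrid_set_sign_row n y e (j : 'I_V) r : val j = n ->
  hybrid n y (set_sign_row e j r) = set_row (hybrid n y e) j (fun i => sgnb R (r i)).
Proof.
move=> jn; apply/funext => t; rewrite /hybrid /set_row; case: eqP => [->|tj].
  by rewrite jn ltnn; apply/funext => i; rewrite ffunE /= eqxx.
by case: ifP => // _; apply/funext => i; rewrite ffunE /=; case: eqP.
Qed.

Lemma hybrid_fupd n y e (j : 'I_V) a : val j = n ->
  hybrid n.+1 (fupd y j a) e = set_row (hybrid n y e) j (label_row R a).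
Proof.
move=> jn; apply/funext => t; rewrite /hybrid /set_row ffunE.
case: eqP => [->|/eqP tj]; first by rewrite jn ltnSn.
by rewrite ltnS leq_eqVlt -jn (inj_eq val_inj) (negbTE tj).
Qed.

Lemma hybrid_sum_step n : (n < V)%N -> hybrid_sum n <= hybrid_sum n.+1.
Proof.
move=> ltnV; pose j := Ordinal ltnV.
have mean_sign y : \sum_e maxscore (hybrid n y e) = \sum_e (2 ^+ k)^-1 *
    \sum_(r : {ffun 'I_k -> bool})
       maxscore (set_row (hybrid n y e) j (fun i => sgnb R (r i))).
  rewrite -mulr_sumr.
  under [in RHS]eq_bigr => e _ do
    under eq_bigr => r _ do rewrite -hybrid_set_sign_row //.
  have /= -> := sum_update (upd := fun e r => set_sign_row e j r)
    (proj := fun e => sign_row e j)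
    (fun e => maxscore (hybrid n y e)) (@set_sign_row_involutive _ _ j).
  rewrite card_ffun card_bool card_ord -[_ *+ (2 ^ k)]mulr_natl natrX.
  by rewrite mulKf // expf_neq0.
have mean_label e : \sum_y maxscore (hybrid n.+1 y e) = \sum_y k%:R^-1 *
    \sum_a maxscore (set_row (hybrid n y e) j (label_row R a)).
  rewrite -mulr_sumr.
  under [in RHS]eq_bigr => y _ do under eq_bigr => a _ do rewrite -hybrid_fupd //.
  have /= -> := sum_update (upd := fun y a => fupd y j a) (proj := fun y => y j)
    (fun y => maxscore (hybrid n.+1 y e)) (fupd_involutive j).
  by rewrite card_ord -[(\sum_a _) *+ _]mulr_natl mulKf // gt_eqF.
rewrite /hybrid_sum [X in X <= _]exchange_big /=.
under eq_bigr => y _ do rewrite mean_sign.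
under [X in _ <= X]eq_bigr => e _ do rewrite mean_label.
rewrite [X in _ <= X]exchange_big /=.
apply: ler_sum => y _; apply: ler_sum => e _.
exact: mean_sign_row_le_mean_label_row.
Qed.

Lemma mean_sign_le_mean_label :
  (2 ^+ (V * k))^-1 * \sum_(e : {ffun 'I_V * 'I_k -> bool})
                         maxscore (fun t i => sgnb R (e (t, i)))
    <= (k%:R ^+ V)^-1 * \sum_(y : {ffun 'I_V -> 'I_k})
                          maxscore (fun t => label_row R (y t)).
Proof.
have mono n : (n <= V)%N -> hybrid_sum 0 <= hybrid_sum n.
  by elim: n => [//|n IH ltnV]; apply: le_trans (IH (ltnW ltnV)) (hybrid_sum_step ltnV).
have := mono V (leqnn V).
have -> : hybrid_sum 0 =
    k%:R ^+ V * \sum_(e : {ffun 'I_V * 'I_k -> bool})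
                  maxscore (fun t i => sgnb R (e (t, i))).
  rewrite mulr_sumr; apply: eq_bigr => e _.
  rewrite (eq_bigr (fun _ => maxscore (fun t i => sgnb R (e (t, i))))) //.
  by rewrite sumr_const card_ffun !card_ord -natrX mulr_natl.
have -> : hybrid_sum V =
    2 ^+ (V * k) * \sum_(y : {ffun 'I_V -> 'I_k}) maxscore (fun t => label_row R (y t)).
  rewrite /hybrid_sum exchange_big mulr_sumr; apply: eq_bigr => y _.
  rewrite (eq_bigr (fun _ => maxscore (fun t => label_row R (y t)))); last first.
    by move=> e _; congr maxscore; apply/funext => t; rewrite /hybrid ltn_ord.
  by rewrite sumr_const card_ffun card_bool card_prod !card_ord -natrX mulr_natl.
set a := \sum_e _; set b := \sum_y _ => ineq.
have p_gt0 : (0 : R) < k%:R ^+ V by rewrite exprn_gt0.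
have q_gt0 : (0 : R) < 2 ^+ (V * k) by rewrite exprn_gt0.
rewrite -(ler_pM2l (mulr_gt0 p_gt0 q_gt0)).
have -> : k%:R ^+ V * 2 ^+ (V * k) * ((2 ^+ (V * k))^-1 * a) = k%:R ^+ V * a.
  by field; rewrite gt_eqF.
have -> : k%:R ^+ V * 2 ^+ (V * k) * ((k%:R ^+ V)^-1 * b) = 2 ^+ (V * k) * b.
  by field; rewrite gt_eqF.
exact: ineq.
Qed.

End Hybrid.

Section Extend.
Variables (T : finType) (n : nat).

Definition extend (f : {ffun 'I_n -> T}) (v : T) : {ffun 'I_n.+1 -> T} :=
  [ffun i : 'I_n.+1 => if insub (val i) is Some j then f j else v].

Lemma extend_widen f v (j : 'I_n) : extend f v (widen_ord (leqnSn n) j) = f j.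
Proof. by rewrite ffunE /= (valK j). Qed.

Lemma extend_max f v : extend f v ord_max = v.
Proof. by rewrite ffunE /= insubF // ltnn. Qed.

Lemma size_seq_of (u : 'I_n -> T) : size (seq_of u) = n.
Proof. by rewrite size_map size_enum_ord. Qed.

Lemma seq_of_extend f v : seq_of (extend f v) = rcons (seq_of f) v.
Proof.
rewrite /seq_of enum_ordSr map_rcons extend_max -map_comp; congr rcons.
by apply: eq_map => j /=; rewrite extend_widen.
Qed.

Lemma sum_extend (R : nmodType) (F : {ffun 'I_n.+1 -> T} -> R) :
  \sum_z F z = \sum_f \sum_v F (extend f v).
Proof.
rewrite pair_big /= (reindex (fun p : {ffun 'I_n -> T} * T => extend p.1 p.2)) //.
exists (fun z : {ffun 'I_n.+1 -> T} =>
  ([ffun j => z (widen_ord (leqnSn n) j)], z ord_max)).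
  move=> [f v] _ /=; congr pair; last exact: extend_max.
  by apply/ffunP => j; rewrite ffunE extend_widen.
move=> z _ /=; apply/ffunP => i; rewrite ffunE.
case: insubP => [j _ ij|]; first by rewrite ffunE; congr (z _); apply: val_inj.
rewrite -leqNgt leq_eqVlt ltnNge -ltnS ltn_ord orbF => /eqP ni.
by congr (z _); apply: val_inj.
Qed.

End Extend.

Section UniformLabels.
Variables (R : realType) (k : nat).
Hypothesis k_gt0 : (0 < k)%N.
Variable G : seq 'I_k -> seq 'I_k -> 'I_k -> R.
Hypothesis G_sum1 : forall h1 h2, \sum_a G h1 h2 a = 1.

Let kgt0 : (0 : R) < k%:R.
Proof. by rewrite ltr0n. Qed.

(* Probability of the predictions [yh] and labels [y] when the forecaster plays
   [G] on the histories and the labels are uniform and independent. *)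
Definition play_weight n (yh y : {ffun 'I_n -> 'I_k}) : R :=
  \prod_(t < n) (G (take t (seq_of yh)) (take t (seq_of y)) (yh t) / k%:R).

Definition play_mean n (Psi : seq 'I_k -> seq 'I_k -> R) : R :=
  \sum_(yh : {ffun 'I_n -> 'I_k}) \sum_(y : {ffun 'I_n -> 'I_k})
     play_weight yh y * Psi (seq_of yh) (seq_of y).

Lemma play_weight_extend n (f g : {ffun 'I_n -> 'I_k}) a b :
  play_weight (extend f a) (extend g b)
    = play_weight f g * (G (seq_of f) (seq_of g) a / k%:R).
Proof.
rewrite /play_weight big_ord_recr /= !seq_of_extend extend_max; congr (_ * _).
  apply: eq_bigr => t _; rewrite extend_widen -!cats1.
  by rewrite !takel_cat // size_seq_of ltnW.
by rewrite -!cats1 !takel_cat ?size_seq_of // !take_oversize // size_seq_of.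
Qed.

Lemma play_meanS n Psi : play_mean n.+1 Psi = play_mean n (fun h1 h2 =>
  \sum_a \sum_b G h1 h2 a / k%:R * Psi (rcons h1 a) (rcons h2 b)).
Proof.
rewrite /play_mean sum_extend; apply: eq_bigr => f _.
rewrite exchange_big /= sum_extend; apply: eq_bigr => g _.
rewrite exchange_big /= mulr_sumr; apply: eq_bigr => a _.
rewrite mulr_sumr; apply: eq_bigr => b _.
by rewrite play_weight_extend !seq_of_extend -!mulrA.
Qed.

Lemma eq_play_mean n Psi1 Psi2 :
  (forall yh y : {ffun 'I_n -> 'I_k},
     Psi1 (seq_of yh) (seq_of y) = Psi2 (seq_of yh) (seq_of y)) ->
  play_mean n Psi1 = play_mean n Psi2.
Proof.
by move=> eqPsi; apply: eq_bigr => yh _; apply: eq_bigr => y _; rewrite eqPsi.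
Qed.

Lemma seq_of_ord0 (z : {ffun 'I_0 -> 'I_k}) : seq_of z = [::].
Proof. by apply: size0nil; rewrite size_seq_of. Qed.

Lemma play_mean_labels n (Phi : seq 'I_k -> R) :
  play_mean n (fun _ h2 => Phi h2)
    = (k%:R ^+ n)^-1 * \sum_(y : {ffun 'I_n -> 'I_k}) Phi (seq_of y).
Proof.
elim: n Phi => [|n IH] Phi.
  rewrite /play_mean expr0 invr1 mul1r.
  rewrite (eq_bigr (fun _ => Phi [::])) => [|yh _]; last first.
    rewrite (eq_bigr (fun _ => Phi [::])) => [|y _]; last first.
      by rewrite /play_weight big_ord0 mul1r seq_of_ord0.
    by rewrite sumr_const card_ffun !card_ord expn0 mulr1n.
  by apply: eq_bigr => y _; rewrite seq_of_ord0.
rewrite play_meanS (@eq_play_mean _ _ (fun _ h2 => k%:R^-1 * \sum_b Phi (rcons h2 b))).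
  rewrite IH -mulr_sumr mulrA exprSr invfM sum_extend.
  by congr (_ * _); apply: eq_bigr => y _; apply: eq_bigr => b _; rewrite seq_of_extend.
move=> yh y; rewrite mulr_sumr -[RHS]mul1r -(G_sum1 (seq_of yh) (seq_of y)) mulr_suml.
by apply: eq_bigr => a _; rewrite !mulr_sumr; apply: eq_bigr => b _; rewrite !mulrA.
Qed.

Definition mismatches (h1 h2 : seq 'I_k) : R :=
  (count (fun p => p.1 != p.2) (zip h1 h2))%:R.

Lemma mismatches_rcons (h1 h2 : seq 'I_k) a b : size h1 = size h2 ->
  mismatches (rcons h1 a) (rcons h2 b) = mismatches h1 h2 + (a != b)%:R.
Proof.
by move=> sz; rewrite /mismatches zip_rcons // -cats1 count_cat /= addn0 natrD.
Qed.

Lemma sum_neq (a : 'I_k) : \sum_(b : 'I_k) ((a != b)%:R : R) = k%:R - 1.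
Proof.
rewrite (eq_bigr (fun b => 1 - ((a == b)%:R : R))) => [|b _]; last first.
  by case: (a == b); rewrite /= ?subrr ?subr0.
rewrite sumrB sumr_const card_ord (bigD1 a) //= eqxx big1 ?addr0 // => b.
by rewrite eq_sym => /negbTE ->.
Qed.

Lemma play_mean1 n : play_mean n (fun _ _ => 1) = 1.
Proof.
rewrite (play_mean_labels n (fun _ => 1)) sumr_const card_ffun !card_ord.
by rewrite natrX mulVf // expf_neq0 // gt_eqF.
Qed.

Lemma play_mean_mismatches n : play_mean n mismatches = n%:R * (1 - k%:R^-1).
Proof.
elim: n => [|n IH].
  rewrite mul0r; apply: big1 => yh _; apply: big1 => y _.
  by rewrite !seq_of_ord0 /mismatches mulr0.
rewrite play_meanS (@eq_play_mean _ _ (fun h1 h2 => mismatches h1 h2 + (1 - k%:R^-1))).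
  transitivity (play_mean n mismatches + (1 - k%:R^-1) * play_mean n (fun _ _ => 1)).
    rewrite /play_mean mulr_sumr -big_split /=; apply: eq_bigr => yh _.
    rewrite mulr_sumr -big_split /=; apply: eq_bigr => y _.
    by rewrite mulr1 mulrDr [_ * play_weight _ _]mulrC.
  by rewrite play_mean1 mulr1 IH -addn1 natrD mulrDl mul1r.
move=> yh y.
under eq_bigr do under eq_bigr do rewrite mismatches_rcons ?size_seq_of //.
transitivity (\sum_a G (seq_of yh) (seq_of y) a / k%:R *
                (k%:R * mismatches (seq_of yh) (seq_of y) + (k%:R - 1))).
  apply: eq_bigr => a _; rewrite -mulr_sumr big_split /= sum_neq.
  by rewrite sumr_const card_ord mulr_natl.
by rewrite -!mulr_suml G_sum1 mul1r; field; rewrite gt_eqF.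
Qed.

End UniformLabels.

Section IntegralScale.
Local Open Scope ereal_scope.
Context d (T : measurableType d) (R : realType) (mu : {measure set T -> \bar R}).
Import HBNNSimple.

(* No measurability is needed: the integral of a nonnegative function is the
   supremum of the integrals of the simple functions below it, and [c] times
   a simple function below [f] is a simple function below [g]. *)
Lemma ge0_le_integral_scale (c : R) (f g : T -> \bar R) : (0 < c)%R ->
  (forall x, 0 <= f x) -> (forall x, 0 <= g x) ->
  (forall x, c%:E * f x <= g x) -> c%:E * \int[mu]_x f x <= \int[mu]_x g x.
Proof.
move=> c_gt0 f0 g0 fg.
rewrite -lee_pdivlMl // (ge0_integralTE mu f0) (ge0_integralTE mu g0).
apply: ge_ereal_sup => _ [h /= hf <-].
rewrite lee_pdivlMl // -sintegralrM.
rewrite (_ : (cst c \* h)%R = scale_nnsfun h (ltW c_gt0)) //.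
apply: ereal_sup_ubound; exists (scale_nnsfun h (ltW c_gt0)) => //= x.
by apply: le_trans (fg x); rewrite EFinM lee_wpmul2l // lee_fin ltW.
Qed.

Lemma le_integral_scale (c : R) (f g : T -> \bar R) : (0 < c)%R ->
  (forall x, c%:E * f x <= g x) -> c%:E * \int[mu]_x f x <= \int[mu]_x g x.
Proof.
move=> c_gt0 fg; rewrite (integralE _ _ f) (integralE _ _ g).
have pos : c%:E * \int[mu]_x f^\+ x <= \int[mu]_x g^\+ x.
  apply: ge0_le_integral_scale => // x; rewrite !funeposE.
  have [f0|f0] := leP 0 (f x); last by rewrite mule0 le_max lexx orbT.
  by apply: le_trans (fg x) _; rewrite le_max lexx.
have neg : c^-1%:E * \int[mu]_x g^\- x <= \int[mu]_x f^\- x.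
  apply: ge0_le_integral_scale; rewrite ?invr_gt0 // => x; rewrite !funenegE.
  have [g0|g0] := leP (- g x) 0; first by rewrite mule0 le_max lexx orbT.
  by rewrite le_max lee_pdivrMl // muleN leeN2 fg.
rewrite lee_pdivrMl // in neg.
have : 0 <= \int[mu]_x f^\- x by apply: integral_ge0 => x _; exact: funeneg_ge0.
case: (\int[mu]_x f^\- x) neg => [b| |] // neg b0.
  by rewrite muleBr ?fin_num_adde_defl //; exact: leeB.
by rewrite addeNy mulrNy gtr0_sg // mul1e leNye.
Qed.

End IntegralScale.

Definition uniform_strategy (R : realType) (V k : nat) (X : Type) :
  strategy R V k X := fun _ _ _ _ => k%:R^-1.

Lemma valid_uniform_strategy (R : realType) (V k : nat) (X : Type) :
  (0 < k)%N -> valid_strategy (@uniform_strategy R V k X).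
Proof.
move=> k_gt0 hI hp hy; split => [a|]; first by rewrite invr_ge0 ler0n.
by rewrite sumr_const card_ord -[k%:R^-1 *+ _]mulr_natr mulVf // pnatr_eq0 -lt0n.
Qed.

Lemma nmistakesE (R : realType) (V k : nat) (yh y : {ffun 'I_V -> 'I_k}) :
  nmistakes R yh y = mismatches R (seq_of yh) (seq_of y).
Proof.
rewrite /nmistakes /mismatches /seq_of zip_map count_map -sum1_count natr_sum.
rewrite [RHS]big_mkcond enumT; apply: eq_bigr => t _.
by rewrite /=; case: (yh t != y t).
Qed.

Lemma nmistakes_score (R : realType) (V k : nat) (g y : {ffun 'I_V -> 'I_k}) :
  (0 < k)%N ->
  nmistakes R g y = V%:R - k%:R^-1 * (score (fun t => label_row R (y t)) g + V%:R).
Proof.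
move=> k_gt0; have k_neq0 : (k%:R : R) != 0 by rewrite pnatr_eq0 -lt0n.
have -> : (V%:R : R) = \sum_(t < V) 1 by rewrite sumr_const card_ord.
rewrite /nmistakes /score -big_split /= mulr_sumr.
rewrite -sumrB; apply: eq_bigr => t _; rewrite /label_row subrK mulKf //.
by case: (g t == y t); rewrite /= ?subrr ?subr0.
Qed.

Lemma ffun_of_seq_of (V k : nat) (a : 'I_k) (y : {ffun 'I_V -> 'I_k}) :
  [ffun t : 'I_V => nth a (seq_of y) t] = y.
Proof.
apply/ffunP => t; rewrite ffunE /seq_of (nth_map t) ?size_enum_ord //.
by rewrite nth_ord_enum.
Qed.

Section Regret.
Variables (R : realType) (V k : nat) (X : Type).
Hypothesis hk : (2 <= k)%N.
Variables (L : set (X -> 'I_k)) (K : R) (I : 'I_V -> instance R V k X).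

Let k_gt0 : (0 < k)%N. Proof. exact: leq_trans hk. Qed.
Let kgt0 : (0 : R) < k%:R. Proof. by rewrite ltr0n. Qed.

Definition labels_of (f : X -> 'I_k) : {ffun 'I_V -> 'I_k} := [ffun t => f (I t).2].

Definition realizable : pred {ffun 'I_V -> 'I_k} :=
  fun g => `[< exists2 f, LK L K I f & labels_of f = g >].

Lemma regret_ge (yh y g : {ffun 'I_V -> 'I_k}) : realizable g ->
  ((nmistakes R yh y - nmistakes R g y)%:E <= regret L K I yh y)%E.
Proof.
move=> /asboolP[f LKf <-]; rewrite /regret EFinB leeB //.
apply: ereal_inf_lbound; exists f => //; congr EFin.
by apply: eq_bigr => t _; rewrite ffunE.
Qed.

Lemma mean_regret_bound (F : strategy R V k X) (gs : _ -> {ffun 'I_V -> 'I_k}) :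
  valid_strategy F ->
  \sum_yh \sum_y play_prob F (@uniform_strategy R V k X) I yh y *
                   (nmistakes R yh y - nmistakes R (gs y) y)
    = V%:R * (1 - k%:R^-1) - (k%:R ^+ V)^-1 * \sum_y nmistakes R (gs y) y.
Proof.
move=> validF.
pose G h1 h2 a := F (take (size h1).+1 (seq_of I)) h1 h2 a.
have G_sum1 h1 h2 : \sum_a G h1 h2 a = 1 by exact: (validF _ _ _).2.
pose ffun_of h : {ffun 'I_V -> 'I_k} := [ffun t : 'I_V => nth (Ordinal k_gt0) h t].
transitivity (play_mean G V (@mismatches R k) -
              play_mean G V (fun _ h => nmistakes R (gs (ffun_of h)) (ffun_of h))).
  rewrite /play_mean -sumrB; apply: eq_bigr => yh _; rewrite -sumrB.
  apply: eq_bigr => y _.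
  rewrite /ffun_of ffun_of_seq_of [nmistakes _ yh _]nmistakesE -mulrBr.
  congr (_ * _); apply: eq_bigr => t _.
  by rewrite /G size_takel // size_seq_of ltnW.
rewrite play_mean_mismatches // play_mean_labels //; congr (_ - _ * _).
by apply: eq_bigr => y _; rewrite /ffun_of ffun_of_seq_of.
Qed.

Lemma Rad_set0 : LK L K I = set0 -> Rad L K I = -oo%E.
Proof.
move=> LK0; rewrite /Rad LK0.
under eq_bigr do
  rewrite image_set0 ereal_sup0 mulrNy gtr0_sg ?invr_gt0 ?exprn_gt0 // mul1e.
by rewrite (bigD1 [ffun=> true]) //= addNye.
Qed.

Lemma Rad_le_mean_maxscore f0 : LK L K I f0 ->
  (Rad L K I <= ((2 ^+ (V * k))^-1 * \sum_(e : {ffun 'I_V * 'I_k -> bool})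
      maxscore realizable (labels_of f0) (fun t i => sgnb R (e (t, i))))%:E)%E.
Proof.
move=> LKf0; rewrite /Rad mulr_sumr -sumEFin; apply: lee_sum => e _.
rewrite EFinM lee_wpmul2l ?lee_fin ?invr_ge0 ?exprn_ge0 //.
apply: ge_ereal_sup => _ [f LKf <-]; rewrite lee_fin.
apply: le_trans (maxscore_ge _ _ (_ : realizable (labels_of f))); last first.
  by apply/asboolP; exists f.
rewrite le_eqVlt; apply/orP; left; apply/eqP; apply: eq_bigr => t _.
rewrite ffunE (bigD1 (f (I t).2)) //= eqxx mulr1 big1 ?addr0 // => i.
by rewrite eq_sym => /negbTE ->; rewrite mulr0.
Qed.

Lemma scaled_Rad_le_exp_regret (F : strategy R V k X) : valid_strategy F ->
  ((k%:R^-1)%:E * Rad L K I <= exp_regret L K F (@uniform_strategy R V k X) I)%E.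
Proof.
move=> validF.
have [[f0 LKf0]|no_f] := pselect (exists f, LK L K I f); last first.
  rewrite Rad_set0; first by rewrite mulrNy gtr0_sg ?invr_gt0 // mul1e leNye.
  by apply/seteqP; split => // f LKf; apply: no_f; exists f.
have realizable_g0 : realizable (labels_of f0) by apply/asboolP; exists f0.
pose label_rows (y : {ffun 'I_V -> 'I_k}) t := label_row R (y t).
have /choice[gs gsP] : forall y, exists g, realizable g /\
    maxscore realizable (labels_of f0) (label_rows y) = score (label_rows y) g.
  by move=> y; exact: maxscore_attained.
apply: le_trans (_ : _ <= (\sum_yh \sum_y play_prob F (@uniform_strategy R V k X) I yh y
                            * (nmistakes R yh y - nmistakes R (gs y) y))%:E)%E _.
  rewrite mean_regret_bound //.
  apply: le_trans (lee_wpmul2l _ (Rad_le_mean_maxscore LKf0)) _.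
    by rewrite lee_fin invr_ge0 ler0n.
  rewrite -EFinM lee_fin.
  apply: le_trans (ler_wpM2l _ (mean_sign_le_mean_label R hk realizable_g0)) _.
    by rewrite invr_ge0 ler0n.
  under [X in _ <= _ - _ * X]eq_bigr do rewrite nmistakes_score // -(gsP _).2.
  have cnt : \sum_(y : {ffun 'I_V -> 'I_k}) (V%:R : R) = k%:R ^+ V * V%:R.
    by rewrite sumr_const card_ffun !card_ord -natrX mulr_natl.
  rewrite sumrB cnt -mulr_sumr big_split /= cnt.
  set B := \sum_y _; set p := k%:R ^+ V.
  have p_neq0 : p != 0 by rewrite expf_neq0 // gt_eqF.
  rewrite le_eqVlt; apply/orP; left; apply/eqP; field.
  by rewrite p_neq0 gt_eqF.
rewrite /exp_regret -sumEFin; apply: lee_sum => yh _.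
rewrite -sumEFin; apply: lee_sum => y _.
rewrite EFinM lee_wpmul2l ?regret_ge ?(gsP y).1 // lee_fin.
apply: prodr_ge0 => t _; rewrite mulr_ge0 ?(validF _ _ _).1 //.
by rewrite invr_ge0 ler0n.
Qed.

End Regret.

Theorem corollary1 (R : realType) (V kappa : nat) (hV : (1 <= V)%N)
  (hkappa : (2 <= kappa)%N) (X : Type) (L : set (X -> 'I_kappa)) (K : R)
  (hK : 0 <= K) (d : measure_display) (Omega : measurableType d)
  (P : probability Omega R) (iota : Omega -> 'I_V -> instance R V kappa X) :
  exists A : strategy R V kappa X, valid_strategy A /\
    forall F : strategy R V kappa X, valid_strategy F ->
      ((kappa%:R^-1)%:E * \int[P]_w Rad L K (iota w)
         <= \int[P]_w exp_regret L K F A (iota w))%E.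
Proof.
have kappa_gt0 : (0 < kappa)%N by apply: leq_trans hkappa.
exists (@uniform_strategy R V kappa X).
split => [|F validF]; first exact: valid_uniform_strategy.
apply: le_integral_scale; first by rewrite invr_gt0 ltr0n.
by move=> w; apply: scaled_Rad_le_exp_regret.
Qed.
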